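(* Let $C$ be an $m\times n$ maximal configuration resistant to predators, with $m\ge 2$. If row $m-1$ (the penultimate row) contains exactly $r$ occupied lots, then every row $i$ with $1\le i\le m-2$ contains at most $r+1$ occupied lots.
   Context: An $m\times n$ configuration is a $0$-$1$ matrix $C=(C_{i,j})$, $1\le i\le m$, $1\le j\le n$; $C_{i,j}=1$ means lot $(i,j)$ is occupied by a house. Row $1$ is the northernmost and row $m$ the southernmost; column $1$ is westernmost and column $n$ easternmost. A house at $(i,j)$ is blocked from sunlight if the three lots $(i,j-1)$, $(i,j+1)$, $(i+1,j)$ all lie inside the grid and are all occupied (lots outside the grid never obstruct sunlight). $C$ is permissible if no house is blocked, and maximal if it is permissible and setting any single empty lot to $1$ yields a non-permissible configuration. A maximal configuration is resistant to predators if, for every empty lot, putting a house on it (alone) results in that new house being blocked. *)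

From mathcomp Require Import all_boot.
Set Implicit Arguments. Unset Strict Implicit. Unset Printing Implicit Defensive.

(* An m x n configuration is represented by C : nat -> nat -> bool, using
   1-based indices: lot (i,j) with 1 <= i <= m, 1 <= j <= n; C i j = true
   means occupied. Values of C outside the grid are irrelevant (never used). *)
Definition config := nat -> nat -> bool.

Definition in_grid (m n i j : nat) : bool := (1 <= i <= m) && (1 <= j <= n).

Definition blocked (m n : nat) (C : config) (i j : nat) : bool :=
  [&& in_grid m n i j.-1, 1 < j, in_grid m n i j.+1, in_grid m n i.+1 j,
      C i j.-1, C i j.+1 & C i.+1 j].

Definition permissible (m n : nat) (C : config) : Prop :=
  forall i j, in_grid m n i j -> C i j -> ~~ blocked m n C i j.

Definition add_house (C : config) (a b : nat) : config :=
  fun i j => if (i == a) && (j == b) then true else C i j.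

Definition maximal (m n : nat) (C : config) : Prop :=
  permissible m n C /\
  forall a b, in_grid m n a b -> ~~ C a b -> ~ permissible m n (add_house C a b).

Definition resistant (m n : nat) (C : config) : Prop :=
  maximal m n C /\
  forall a b, in_grid m n a b -> ~~ C a b -> blocked m n (add_house C a b) a b.

Definition row_count (n : nat) (C : config) (i : nat) : nat :=
  \sum_(1 <= j < n.+1) C i j.

From mathcomp Require Import all_boot.
From mathcomp Require Import zify.

(* Weigh a row by counting each empty lot (hole) once if it has at least two
   lots to its left and once if it has at least two lots to its right.  In a
   resistant configuration a house stands below every hole, every hole is
   flanked by houses, and below three consecutive houses the lot is empty.
   Hence each hole p of a lower row can be charged to a hole of the row above
   at p-1 or p-2 (resp. p+1 or p+2), injectively because holes are never
   adjacent: the weight does not increase going down.  As the first and last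
   lots of a row are never empty, the weight is twice the number of holes up to
   an error of at most 2, so row m-1 has at most one hole more than any row
   above it. *)

Lemma count_le_inj (T1 T2 : eqType) (P : pred T1) (Q : pred T2) (f : T1 -> T2)
    (s : seq T1) (t : seq T2) :
    uniq s -> {in [seq x <- s | P x] &, injective f} ->
    (forall x, x \in s -> P x -> (f x \in t) && Q (f x)) ->
  count P s <= count Q t.
Proof.
move=> s_uniq f_inj f_into; rewrite -!size_filter -(size_map f).
apply: uniq_leq_size => [|_ /mapP[x + ->]].
  by rewrite map_inj_in_uniq ?filter_uniq.
by rewrite !mem_filter => /andP[Px sx]; rewrite andbC f_into.
Qed.

Lemma count_le_cover (T : eqType) (P Q R : pred T) (s : seq T) :
    {in s, forall x, P x -> Q x || R x} ->
  count P s <= count Q s + count R s.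
Proof.
elim: s => //= x s IHs cover; rewrite addnACA leq_add ?IHs //; last first.
  by move=> y sy; apply: cover; rewrite inE sy orbT.
have := cover x (mem_head x s).
by case: (P x) (Q x) (R x) => [] [] [] // /(_ isT).
Qed.

Definition holes (P : pred nat) (n : nat) (x : nat -> bool) : nat :=
  count [pred j | P j && ~~ x j] (iota 1 n).

Definition hole_weight (n : nat) (x : nat -> bool) : nat :=
  holes (leq 3) n x + holes (fun j => j.+2 <= n) n x.

Lemma hole_weight_le_double n x : hole_weight n x <= 2 * holes predT n x.
Proof. by rewrite mul2n -addnn leq_add // sub_count // => j /andP[]. Qed.

Lemma holes_le_succ P n x c :
    (forall j, 0 < j <= n -> ~~ x j -> P j || (j == c)) ->
  holes predT n x <= holes P n x + 1.
Proof.
move=> cover.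
apply: leq_trans (@count_le_cover _ _ [pred j | P j && ~~ x j] (pred1 c) _ _) _.
  move=> j; rewrite mem_iota /= => j_in xj; rewrite xj andbT.
  by apply: cover => //; lia.
by rewrite leq_add2l count_uniq_mem ?iota_uniq ?leq_b1.
Qed.

Lemma double_holes_le n x :
    (forall j, 0 < j <= n -> ~~ x j -> 1 < j < n) ->
  2 * holes predT n x <= hole_weight n x + 2.
Proof.
move=> interior.
have left_err : holes predT n x <= holes (leq 3) n x + 1.
  apply: (@holes_le_succ _ _ _ 2) => j j_in xj.
  by have := interior j j_in xj; lia.
have right_err : holes predT n x <= holes (fun j => j.+2 <= n) n x + 1.
  apply: (@holes_le_succ _ _ _ n.-1) => j j_in xj.
  by have := interior j j_in xj; lia.
by rewrite /hole_weight; lia.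
Qed.

Section AdjacentRows.

Variables (n : nat) (a b : nat -> bool).
Hypothesis below_hole : forall j, 0 < j <= n -> ~~ a j -> b j.
Hypothesis hole_flanked :
  forall j, 0 < j <= n -> ~~ b j -> [/\ 1 < j < n, b j.-1 & b j.+1].
Hypothesis below_full_triple :
  forall j, 1 < j < n -> a j.-1 -> a j -> a j.+1 -> ~~ b j.

Lemma above_hole j : 0 < j <= n -> ~~ b j -> a j.
Proof. by move=> j_in; apply: contraR; apply: below_hole. Qed.

Lemma holes_gap p q : 0 < p <= n -> ~~ b p -> ~~ b q -> p < q -> p.+1 < q.
Proof.
move=> p_in bp bq lt_pq; have [_ _ bp1] := hole_flanked _ p_in bp.
by rewrite ltn_neqAle lt_pq andbT; apply: contraTneq bq => <-; rewrite bp1.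
Qed.

Let lower_hole (P : pred nat) p :
  p \in [seq j <- iota 1 n | P j && ~~ b j] -> [/\ P p, 0 < p <= n & ~~ b p].
Proof.
by rewrite mem_filter mem_iota => /andP[/andP[Pp bp] ?]; split => //; lia.
Qed.

Lemma holes_left_le : holes (leq 3) n b <= holes (fun j => j.+2 <= n) n a.
Proof.
pose f p := if a p.-1 then p.-2 else p.-1.
apply: (@count_le_inj _ _ _ _ f _ _ (iota_uniq 1 n)).
  apply: incn_inj_in; apply: leq_mono_in => p q.
  move=> /lower_hole[p3 p_in bp] /lower_hole[q3 q_in bq] lt_pq.
  have := holes_gap p q p_in bp bq lt_pq; rewrite /f.
  by case: (a p.-1); case: (a q.-1); lia.
move=> p; rewrite mem_iota /= => p_in /andP[p3 bp].
have [p_mid bl _] := hole_flanked p ltac:(lia) bp.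
have ap := above_hole p ltac:(lia) bp.
rewrite /f; case: ifP => al; last by rewrite mem_iota al; lia.
have al2 : ~~ a p.-2.
  apply: contraL bl => al2.
  by apply: below_full_triple; rewrite ?prednK //; lia.
by rewrite mem_iota al2; lia.
Qed.

Lemma holes_right_le : holes (fun j => j.+2 <= n) n b <= holes (leq 3) n a.
Proof.
pose f p := if a p.+1 then p.+2 else p.+1.
apply: (@count_le_inj _ _ _ _ f _ _ (iota_uniq 1 n)).
  apply: incn_inj_in; apply: leq_mono_in => p q.
  move=> /lower_hole[pn p_in bp] /lower_hole[qn q_in bq] lt_pq.
  have := holes_gap p q p_in bp bq lt_pq; rewrite /f.
  by case: (a p.+1); case: (a q.+1); lia.
move=> p; rewrite mem_iota /= => p_in /andP[pn bp].
have [p_mid _ br] := hole_flanked p ltac:(lia) bp.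
have ap := above_hole p ltac:(lia) bp.
rewrite /f; case: ifP => ar; last by rewrite mem_iota ar; lia.
have ar2 : ~~ a p.+2.
  by apply: contraL br => ar2; apply: below_full_triple => //; lia.
by rewrite mem_iota ar2; lia.
Qed.

Lemma hole_weight_lower_le : hole_weight n b <= hole_weight n a.
Proof.
by rewrite /hole_weight addnC leq_add ?holes_left_le ?holes_right_le.
Qed.

End AdjacentRows.

Lemma permissible_full_triple m n C i j :
  permissible m n C -> 0 < i < m -> 1 < j < n ->
  C i j.-1 -> C i j -> C i j.+1 -> ~~ C i.+1 j.
Proof.
move=> perm i_in j_in l c r; have := perm i j ltac:(rewrite /in_grid; lia) c.
by rewrite /blocked /in_grid l r /=; apply: contra => ->; rewrite !andbT; lia.
Qed.

Section Resistant.

Context {m n : nat} {C : config}.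
Hypothesis res : resistant m n C.

Lemma resistant_hole i j : in_grid m n i j -> ~~ C i j ->
  [/\ 1 < j < n, i < m, C i j.-1, C i j.+1 & C i.+1 j].
Proof.
case: res => _ blocked_if_added ij_in Cij.
have := blocked_if_added _ _ ij_in Cij; move: ij_in.
rewrite /blocked /add_house /in_grid eqxx /= => ij_in.
have [-> -> ->] :
    [/\ (j.-1 == j) = false, (j.+1 == j) = false & (i.+1 == i) = false].
  by split; apply/negbTE; lia.
rewrite ?andbF /= => /and5P[_ j1 /andP[_ jn] /and3P[im _ _] /and3P[-> -> ->]].
by rewrite j1.
Qed.

Lemma hole_weight_step i : 0 < i -> i.+1 < m ->
  hole_weight n (C i.+1) <= hole_weight n (C i).
Proof.
move=> i0 im; have [[perm _] _] := res.
apply: hole_weight_lower_le => j j_in.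
- move=> Cj; have ij_in : in_grid m n i j by rewrite /in_grid; lia.
  by have [] := resistant_hole i j ij_in Cj.
- move=> Cj; have ij_in : in_grid m n i.+1 j by rewrite /in_grid; lia.
  by have [? _ ? ? _] := resistant_hole i.+1 j ij_in Cj.
- by apply: permissible_full_triple perm _ _; lia.
Qed.

Lemma hole_weight_antitone i k : 0 < i <= k -> k < m ->
  hole_weight n (C k) <= hole_weight n (C i).
Proof.
move=> i_le km.
apply: (@homo_leq_in _ [pred k | 0 < k < m] (fun k => hole_weight n (C k))
          (fun x y => y <= x)); rewrite ?inE; try lia.
- by move=> x y + + z; rewrite !inE; lia.
- by move=> j; rewrite !inE => /andP[j0 _] /andP[_ jm]; apply: hole_weight_step.
Qed.

End Resistant.

Lemma row_count_add_holes n C i : row_count n C i + holes predT n (C i) = n.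
Proof.
have -> : row_count n C i = count (C i) (iota 1 n).
  by rewrite /row_count /index_iota subSS subn0 -sumn_count sumnE big_map.
rewrite -[RHS](size_iota 1 n) -(count_predC (C i)).
by congr (_ + _); apply: eq_count.
Qed.

Theorem mainTheorem8 (m n : nat) (C : config) (r : nat) :
  2 <= m -> resistant m n C -> row_count n C m.-1 = r ->
  forall i, 1 <= i <= m - 2 -> row_count n C i <= r.+1.
Proof.
move=> m2 res <- i i_in.
have interior j : 0 < j <= n -> ~~ C m.-1 j -> 1 < j < n.
  move=> j_in Cj; have jm_in : in_grid m n m.-1 j by rewrite /in_grid; lia.
  by have [] := resistant_hole res m.-1 j jm_in Cj.
have := hole_weight_antitone res i m.-1 ltac:(lia) ltac:(lia).
have := hole_weight_le_double n (C i).
have := double_holes_le n (C m.-1) interior.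
have := row_count_add_holes n C i.
have := row_count_add_holes n C m.-1.
lia.
Qed.
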